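(* There exists a continuous function $f:\mathrm{SO}(4)\to S^3\times S^3$ such that for every rotation $R\in\mathrm{SO}(4)$, $d_4(R,\mathbf{R}_{QQ}(f(R)))\le\pi$.
   Context: Identify $\mathbb{R}^4$ with the quaternions via $(w,x,y,z)\leftrightarrow w+x\mathbf{i}+y\mathbf{j}+z\mathbf{k}$; $S^3$ is the set of unit quaternions. For $(\mathbf{q}_L,\mathbf{q}_R)\in S^3\times S^3$, $\mathbf{R}_{QQ}(\mathbf{q}_L,\mathbf{q}_R)\in\mathrm{SO}(4)$ is the rotation $\mathbf{p}\mapsto\mathbf{q}_L\mathbf{p}\mathbf{q}_R$; every element of $\mathrm{SO}(4)$ is of this form, with $(\mathbf{q}_L,\mathbf{q}_R)$ determined up to overall sign. For unit quaternions let $d_Q(\mathbf{p},\mathbf{q})=\cos^{-1}(\mathbf{p}\cdot\mathbf{q})$. For $R_1=\mathbf{R}_{QQ}(\mathbf{p}_L,\mathbf{p}_R)$ and $R_2=\mathbf{R}_{QQ}(\mathbf{q}_L,\mathbf{q}_R)$, $d_4(R_1,R_2)=\min\{a+b,2\pi-a-b\}+|a-b|$ where $a=d_Q(\mathbf{p}_L,\mathbf{q}_L)$, $b=d_Q(\mathbf{p}_R,\mathbf{q}_R)$ (independent of representatives; equal to $|\theta|+|\phi|$ where $e^{\pm i\theta},e^{\pm i\phi}$ are the eigenvalues of $R_2R_1^{-1}$). *)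

From HB Require Import structures.
From mathcomp Require Import all_boot all_order all_algebra.
From mathcomp Require Import all_classical all_reals all_analysis.
Set Implicit Arguments. Unset Strict Implicit. Unset Printing Implicit Defensive.
Import Order.TTheory GRing.Theory Num.Theory.
Import numFieldNormedType.Exports.
Local Open Scope classical_set_scope.
Local Open Scope ring_scope.

(* Quaternions w + x i + y j + z k are represented as row vectors (w,x,y,z)
   in 'rV[R]_4 (coordinates 0,1,2,3). *)
Definition quat (R : realType) := 'rV[R]_4.

Definition qc {R : realType} (p : 'rV[R]_4) (k : nat) : R := p ord0 (inord k).

Definition mk4 {R : realType} (a b c d : R) : 'rV[R]_4 :=
  \row_(i < 4) (match val i with 0 => a | 1 => b | 2 => c | _ => d end)%N.

Definition qmul {R : realType} (p q : 'rV[R]_4) : 'rV[R]_4 :=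
  let a1 := qc p 0 in let b1 := qc p 1 in let c1 := qc p 2 in let d1 := qc p 3 in
  let a2 := qc q 0 in let b2 := qc q 1 in let c2 := qc q 2 in let d2 := qc q 3 in
  mk4 (a1*a2 - b1*b2 - c1*c2 - d1*d2)
      (a1*b2 + b1*a2 + c1*d2 - d1*c2)
      (a1*c2 - b1*d2 + c1*a2 + d1*b2)
      (a1*d2 + b1*c2 - c1*b2 + d1*a2).

Definition qdot {R : realType} (p q : 'rV[R]_4) : R := \sum_(i < 4) p ord0 i * q ord0 i.

Definition S3 {R : realType} : set 'rV[R]_4 := [set p | qdot p p = 1].

Definition SO4 {R : realType} : set 'M[R]_4 :=
  [set M | M^T *m M = 1%:M /\ \det M = 1].

(* R_QQ(qL,qR): the matrix (w.r.t. the standard basis, acting on column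
   vectors) of the linear map p |-> qL p qR.  Column j is the image of e_j. *)
Definition RQQ {R : realType} (qL qR : 'rV[R]_4) : 'M[R]_4 :=
  \matrix_(i < 4, j < 4) (qmul (qmul qL (delta_mx ord0 j)) qR) ord0 i.

Definition dQ {R : realType} (p q : 'rV[R]_4) : R := acos (qdot p q).

(* d_4 expressed through quaternion representatives:
   d4Q (pL,pR) (qL,qR) = min{a+b, 2pi-a-b} + |a-b|,
   a = dQ pL qL, b = dQ pR qR. *)
Definition d4Q {R : realType} (P Q : 'rV[R]_4 * 'rV[R]_4) : R :=
  let a := dQ P.1 Q.1 in let b := dQ P.2 Q.2 in
  Num.min (a + b) (2 * pi - a - b) + `|a - b|.

(* Take f(M) = (1, M e_0), with e_0 = 1 the real unit.  If M = R_QQ(p_L, p_R)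
   then M e_0 = p_L p_R, and p_R . (p_L p_R) = Re p_L = p_L . 1 because p_R is
   a unit quaternion.  Hence the two angles a, b entering d_4 coincide, and
   d_4 = min(2a, 2 pi - 2a) <= pi. *)
From HB Require Import structures.
From mathcomp Require Import all_boot all_order all_algebra.
From mathcomp Require Import all_classical all_reals all_analysis.
From mathcomp Require Import ring lra.
Import Order.TTheory GRing.Theory Num.Theory.
Import numFieldNormedType.Exports.
Local Open Scope classical_set_scope.
Local Open Scope ring_scope.

Section QuaternionRotations.
Variable R : realType.
Implicit Types (p q : 'rV[R]_4) (M : 'M[R]_4).

Definition qone : 'rV[R]_4 := delta_mx ord0 ord0.

Definition col0 M : 'rV[R]_4 := \row_i M i ord0.

Lemma mk4E (a b c d : R) :
  (qc (mk4 a b c d) 0 = a) * (qc (mk4 a b c d) 1 = b) *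
  (qc (mk4 a b c d) 2 = c) * (qc (mk4 a b c d) 3 = d).
Proof.
have inord4 k : (k < 4)%N -> val (inord k : 'I_4) = k by exact: inordK.
by rewrite /qc !mxE !inord4.
Qed.

Lemma quat_eta p : p = mk4 (qc p 0) (qc p 1) (qc p 2) (qc p 3).
Proof.
apply/rowP => i; rewrite mxE /qc.
case: i => -[|[|[|[|//]]]] i4 /=.
all: by congr (p _ _); apply/val_inj; rewrite /= inordK.
Qed.

Lemma qc_qone k : (k < 4)%N -> qc qone k = (k == 0)%:R.
Proof.
by move=> k4; rewrite /qc /qone mxE eqxx -val_eqE /= inordK // eq_sym.
Qed.

Lemma qdotE p q : qdot p q =
  qc p 0 * qc q 0 + qc p 1 * qc q 1 + qc p 2 * qc q 2 + qc p 3 * qc q 3.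
Proof.
rewrite [in LHS](quat_eta p) [in LHS](quat_eta q) /qdot.
by rewrite !big_ord_recl big_ord0 !mxE /= addr0 !addrA.
Qed.

Lemma qdotq1 p : qdot p qone = qc p 0.
Proof. by rewrite qdotE !qc_qone //=; ring. Qed.

Lemma qmulq1 p : qmul p qone = p.
Proof. by rewrite [RHS]quat_eta /qmul !qc_qone //=; congr mk4; ring. Qed.

Lemma qdot_qmull p q : qdot q (qmul p q) = qc p 0 * qdot q q.
Proof. by rewrite !qdotE /qmul !mk4E; ring. Qed.

Lemma S3_qone : S3 qone.
Proof. by rewrite /S3 /= qdotq1 qc_qone. Qed.

Lemma dQ_qmull p q : S3 q -> dQ q (qmul p q) = dQ p qone.
Proof. by rewrite /S3 /dQ /= qdot_qmull qdotq1 => ->; rewrite mulr1. Qed.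

Lemma col0_RQQ pL pR : col0 (RQQ pL pR) = qmul pL pR.
Proof. by apply/rowP => i; rewrite !mxE -/qone qmulq1. Qed.

Lemma col0_S3 M : M^T *m M = 1%:M -> S3 (col0 M).
Proof.
rewrite /S3 /= /qdot => /(congr1 (fun A : 'M[R]_4 => A ord0 ord0)).
rewrite !mxE eqxx mulr1n => <-.
by apply: eq_bigr => i _; rewrite !mxE.
Qed.

Lemma col0_continuous : continuous col0.
Proof.
move=> M; have nbhsM_filter := @nbhs_filter _ M.
apply/cvg_ballP => e e0.
exists (fun i j => ball (M i j) e); first by move=> i j; exact: nbhsx_ballx.
by move=> N NM; split => // i j; rewrite !mxE; exact: NM.
Qed.

Lemma d4Q_le_pi (P Q : 'rV[R]_4 * 'rV[R]_4) :
  dQ P.1 Q.1 = dQ P.2 Q.2 -> d4Q P Q <= pi.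
Proof.
rewrite /d4Q => ->; set b := dQ P.2 Q.2.
rewrite subrr normr0 addr0 ge_min.
by have [h|h] := lerP (b + b) pi; apply/orP; [left|right]; lra.
Qed.

End QuaternionRotations.

Theorem theorem13 (R : realType) :
  exists f : 'M[R]_4 -> 'rV[R]_4 * 'rV[R]_4,
    {within (@SO4 R), continuous f} /\
    (forall M, SO4 M -> S3 (f M).1 /\ S3 (f M).2) /\
    (forall M, SO4 M ->
       forall pL pR : 'rV[R]_4, S3 pL -> S3 pR -> M = RQQ pL pR ->
         d4Q (pL, pR) (f M) <= pi).
Proof.
exists (fun M => (qone R, col0 R M)); split; [|split].
- apply: continuous_subspaceT => M.
  apply: (cvg_pair (FF := nbhs_filter M) (FG := nbhs_filter _) (FH := nbhs_filter _)).
    exact: cvg_cst.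
  exact: col0_continuous.
- by move=> M [orthM _]; split; [exact: S3_qone | exact: col0_S3].
- move=> M _ pL pR _ S3pR ->; apply: d4Q_le_pi.
  by rewrite /= col0_RQQ dQ_qmull.
Qed.
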